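(* Let $N$ be a consistent observation machine from $Y$ to $Z$ and let $k=d(N)$. Let $X=Y\times\{0,\dots,k-1\}$, $\hat Y=Y\cup\{\bot\}$, $\hat Z=Z\cup\{\bot\}$, where $\bot$ is a fresh symbol. Then there exist Mealy machines $H$ from $X$ to $\hat Y$ and $M$ from $X$ to $\hat Z$ such that (1) $|S_H|=|S_M|=|S_N|+1$; (2) there exists a Mealy machine $T$ from $\hat Y$ to $\hat Z$ with $T\circ H\equiv M$; and (3) every Mealy machine $T$ from $\hat Y$ to $\hat Z$ with $T\circ H\equiv M$ satisfies $\lambda_T(\overline{y})=\lambda_N(\overline{y})$ for all $\overline{y}\in\Omega_N$.
   Context: An observation machine from $Y$ to $Z$ is a tuple $(Y,Z,S,D,\Delta,\lambda,r)$ with $S$ finite, $D\subseteq S\times Y$, $\Delta:D\to 2^S\setminus\{\emptyset\}$, $\lambda:D\to Z$, $r\in S$. A run on $y_0\dots y_n$ from $s_0$ is $s_0,y_0,z_0,s_1,\dots,s_{n+1}$ with $(s_i,y_i)\in D$, $s_{i+1}\in\Delta(s_i,y_i)$, $z_i=\lambda(s_i,y_i)$; $\Omega_N$ is the set of words having a run from $r$; $N$ is consistent if all runs from $r$ on each $\overline{y}\in\Omega_N$ have the same output word $\lambda_N(\overline{y})$. The degree is $d(N)=\max_{(s,y)\in D}|\Delta(s,y)|$. A Mealy machine from $X$ to $Y$ is $(X,Y,S,\delta,\lambda,r)$ with total $\delta:S\times X\to S$, $\lambda:S\times X\to Y$; $\lambda(\overline{x})$ is the output word from $r$. $T\circ H$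 is the cascade: states $S_H\times S_T$, initial $(r_H,r_T)$, and with $y=\lambda_H(s_H,x)$, $\delta((s_H,s_T),x)=(\delta_H(s_H,x),\delta_T(s_T,y))$, $\lambda((s_H,s_T),x)=\lambda_T(s_T,y)$; $\equiv$ means same output word on every input word. *)

From mathcomp Require Import all_boot.
Set Implicit Arguments. Unset Strict Implicit. Unset Printing Implicit Defensive.

(* Observation machine from Y to Z. The partial maps Delta, lam are total
   functions whose values outside the domain D are irrelevant. *)
Record obsMachine (Y Z : finType) := ObsMachine {
  oS : finType;
  oD : oS -> Y -> bool;
  oDelta : oS -> Y -> {set oS};
  olam : oS -> Y -> Z;
  or : oS;
  oDelta_ne : forall s y, oD s y -> oDelta s y != set0 }.

Section Obs.
Variables (Y Z : finType) (N : obsMachine Y Z).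

(* isRun s ys ss : s, ys_0, _, ss_0, ys_1, _, ss_1, ... is a run on ys from s;
   ss lists the states s_1 ... s_{n+1}. *)
Fixpoint isRun (s : oS N) (ys : seq Y) (ss : seq (oS N)) : Prop :=
  match ys, ss with
  | [::], [::] => True
  | y :: ys', s' :: ss' => @oD _ _ N s y /\ s' \in @oDelta _ _ N s y /\ isRun s' ys' ss'
  | _, _ => False
  end.

Fixpoint runOut (s : oS N) (ys : seq Y) (ss : seq (oS N)) : seq Z :=
  match ys, ss with
  | y :: ys', s' :: ss' => @olam _ _ N s y :: runOut s' ys' ss'
  | _, _ => [::]
  end.

Definition inOmega (ys : seq Y) : Prop := exists ss, isRun (@or _ _ N) ys ss.

Definition consistent : Prop :=
  forall ys ss1 ss2, isRun (@or _ _ N) ys ss1 -> isRun (@or _ _ N) ys ss2 ->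
    runOut (@or _ _ N) ys ss1 = runOut (@or _ _ N) ys ss2.

Definition degree : nat :=
  \max_(p : oS N * Y | @oD _ _ N p.1 p.2) #|@oDelta _ _ N p.1 p.2|.
End Obs.

Record mealy (X Y : finType) := Mealy {
  mS : finType;
  mdelta : mS -> X -> mS;
  mlam : mS -> X -> Y;
  mr : mS }.

Fixpoint moutFrom (X Y : finType) (M : mealy X Y) (s : mS M) (xs : seq X) : seq Y :=
  match xs with
  | [::] => [::]
  | x :: xs' => @mlam _ _ M s x :: moutFrom (@mdelta _ _ M s x) xs'
  end.

Definition mout (X Y : finType) (M : mealy X Y) (xs : seq X) : seq Y :=
  moutFrom (@mr _ _ M) xs.

Definition cascade (X Y W : finType) (T : mealy Y W) (H : mealy X Y) : mealy X W :=
  @Mealy X W (prod (mS H) (mS T))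
    (fun st x => (mdelta st.1 x, mdelta st.2 (mlam st.1 x)))
    (fun st x => mlam st.2 (mlam st.1 x))
    (mr H, mr T).

Definition mequiv (X Y : finType) (M1 M2 : mealy X Y) : Prop :=
  forall xs, mout M1 xs = mout M2 xs.

From mathcomp Require Import all_boot.
Set Implicit Arguments. Unset Strict Implicit. Unset Printing Implicit Defensive.

(* H and M both simulate N deterministically: the letter (y, i) resolves the
   nondeterminism of N by taking the i-th successor of Delta(s, y), and an
   undefined step sends them to the sink state bot.  H echoes y, M outputs
   lambda(s, y).  The subset construction T on Y + bot, which tracks all states
   of N reachable on the observed word, satisfies T o H = M, because by
   consistency every enabled state of that set has the same output.
   Conversely, every run of N is driven by some input word of H and M, so any
   T with T o H = M must reproduce the output of that run. *)

Lemma moutFrom_cascade (X Y W : finType) (T : mealy Y W) (H : mealy X Y) h t xs :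
  moutFrom (M := cascade T H) (h, t) xs = moutFrom t (moutFrom h xs).
Proof. by elim: xs h t => //= x xs IH h t; rewrite IH. Qed.

Section Runs.
Variables (Y Z : finType) (N : obsMachine Y Z).
Implicit Types (s t : oS N) (y : Y) (ys : seq Y) (ss : seq (oS N)).

Lemma size_isRun s ys ss : isRun s ys ss -> size ys = size ss.
Proof. by elim: ys s ss => [|y ys IH] s [|s' ss] //= [_ [_ /IH ->]]. Qed.

Lemma isRun_rcons s ys ss y t :
  isRun s ys ss -> oD (last s ss) y -> t \in oDelta (last s ss) y ->
  isRun s (rcons ys y) (rcons ss t).
Proof.
elim: ys s ss => [|y0 ys IH] s [|s0 ss] //= [D0 [in0 run]] D tD.
by split; last split; last apply: IH.
Qed.

Lemma runOut_rcons s ys ss y t : size ys = size ss ->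
  runOut s (rcons ys y) (rcons ss t) = rcons (runOut s ys ss) (olam (last s ss) y).
Proof. by elim: ys s ss => [|y0 ys IH] s [|s0 ss] //= [/IH ->]. Qed.

Definition reachable ys t := exists ss, isRun (or N) ys ss /\ last (or N) ss = t.

Lemma reachable_rcons ys y s t :
  reachable ys s -> oD s y -> t \in oDelta s y -> reachable (rcons ys y) t.
Proof.
move=> [ss [run <-]] D tD; exists (rcons ss t).
by rewrite last_rcons; split => //; apply: isRun_rcons.
Qed.

Lemma consistent_olam ys y s1 s2 : consistent N ->
  reachable ys s1 -> reachable ys s2 -> oD s1 y -> oD s2 y ->
  olam s1 y = olam s2 y.
Proof.
move=> cons [ss1 [run1 last1]] [ss2 [run2 last2]] D1 D2.
have /set0Pn [t1 t1D] := oDelta_ne D1.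
have /set0Pn [t2 t2D] := oDelta_ne D2.
have run1' : isRun (or N) (rcons ys y) (rcons ss1 t1).
  by apply: isRun_rcons => //; rewrite last1.
have run2' : isRun (or N) (rcons ys y) (rcons ss2 t2).
  by apply: isRun_rcons => //; rewrite last2.
have := cons _ _ _ run1' run2'.
rewrite (runOut_rcons _ _ _ (size_isRun run1)) (runOut_rcons _ _ _ (size_isRun run2)).
rewrite last1 last2.
by move/rcons_inj => [].
Qed.

End Runs.

Section Construction.
Variables (Y Z : finType) (N : obsMachine Y Z).
Local Notation X := (prod Y 'I_(degree N)).
Implicit Types (s t : oS N) (x : X).

Definition guided_step s x : option (oS N) :=
  if oD s x.1 && (val x.2 < #|oDelta s x.1|)
  then Some (nth s (enum (oDelta s x.1)) x.2) else None.

Definition guided (W : finType) (out : oS N -> Y -> W) : mealy X (option W) :=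
  @Mealy X (option W) (option (oS N))
    (fun o x => if o is Some s then guided_step s x else None)
    (fun o x => if o is Some s then
                  (if guided_step s x then Some (out s x.1) else None)
                else None)
    (Some (or N)).

Definition echo_machine := guided (fun _ y => y).
Definition output_machine := guided (@olam _ _ N).

Lemma guided_step_some s x t :
  guided_step s x = Some t -> oD s x.1 /\ t \in oDelta s x.1.
Proof.
rewrite /guided_step; case: ifP => // /andP [D lt] [<-].
by split; rewrite // -mem_enum mem_nth // -cardE.
Qed.

Lemma guided_step_succ s y t : oD s y -> t \in oDelta s y ->
  exists i : 'I_(degree N), guided_step s (y, i) = Some t.
Proof.
move=> D tD.
have lt : index t (enum (oDelta s y)) < #|oDelta s y|.
  by rewrite cardE index_mem mem_enum.
have ltk : index t (enum (oDelta s y)) < degree N.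
  exact: leq_trans lt (leq_bigmax_cond (s, y) D).
exists (Ordinal ltk).
by rewrite /guided_step /= D lt nth_index ?mem_enum.
Qed.

Lemma guided_isRun s ys ss : isRun s ys ss -> exists xs,
  moutFrom (M := echo_machine) (Some s) xs = map Some ys /\
  moutFrom (M := output_machine) (Some s) xs = map Some (runOut s ys ss).
Proof.
elim: ys s ss => [|y ys IH] s [|t ss] //=; first by exists [::].
move=> [D [tD /IH [xs [echo out]]]].
have [i step] := guided_step_succ D tD.
by exists ((y, i) :: xs); rewrite /= step echo out.
Qed.

Definition enabled (A : {set oS N}) y := [set s in A | oD s y].

Definition subset_machine : mealy (option Y) (option Z) :=
  @Mealy (option Y) (option Z) {set oS N}
    (fun A oy => if oy is Some y then \bigcup_(s in enabled A y) oDelta s y else A)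
    (fun A oy => if oy is Some y then
                   (if [pick s in enabled A y] is Some s then Some (olam s y) else None)
                 else None)
    [set or N].

(* The invariant: A is a set of states reachable on one common word w,
   containing the current state of the output machine when it is not the sink. *)
Lemma subset_machine_cascade xs o (A : {set oS N}) w : consistent N ->
  (forall t, t \in A -> reachable w t) ->
  (if o is Some s then s \in A else true) ->
  moutFrom (M := cascade subset_machine echo_machine) (o, A) xs =
  moutFrom (M := output_machine) o xs.
Proof.
move=> cons; elim: xs o A w => [|x xs IH] o A w reachA oA //=.
case: o oA => [s sA|_] /=; last by rewrite (IH None A w).
case step: (guided_step s x) => [t|] /=; last by rewrite (IH None A w).
have [D tD] := guided_step_some step.
have s_en : s \in enabled A x.1 by rewrite inE sA D.
case: pickP => [s' /setIdP [s'A D'] | /(_ s)]; last by rewrite s_en.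
rewrite (consistent_olam cons (reachA _ s'A) (reachA _ sA) D' D).
congr (_ :: _); apply: (IH _ _ (rcons w x.1)).
- move=> u /bigcupP [s1 /setIdP [s1A D1] uD].
  exact: reachable_rcons (reachA _ s1A) D1 uD.
- by apply/bigcupP; exists s.
Qed.

End Construction.

Theorem lemma3 (Y Z : finType) (N : obsMachine Y Z) :
  consistent N ->
  exists (H : mealy (prod Y 'I_(degree N)) (option Y))
         (M : mealy (prod Y 'I_(degree N)) (option Z)),
    [/\ #|mS H| = #|oS N|.+1 /\ #|mS M| = #|oS N|.+1,
        (exists T : mealy (option Y) (option Z), mequiv (cascade T H) M) &
        forall T : mealy (option Y) (option Z), mequiv (cascade T H) M ->
          forall (ys : seq Y) (ss : seq (oS N)), isRun (or N) ys ss ->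
            mout T (map Some ys) = map Some (runOut (or N) ys ss)].
Proof.
move=> cons; exists (echo_machine N), (output_machine N); split.
- by rewrite /= card_option.
- exists (subset_machine N) => xs.
  apply: (subset_machine_cascade _ _ (w := [::])) => //= [t|]; last exact: set11.
  by rewrite inE => /eqP ->; exists [::].
move=> T TH_M ys ss run.
have [xs [echo out]] := guided_isRun run.
by rewrite -echo -out -[RHS]/(mout _ xs) -TH_M /mout /= moutFrom_cascade.
Qed.
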